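(* Let $V \subset \mathbb{R}^2$ be a finite point set in general position and $m$ a positive integer. Then $\mathcal{H}(V,\mathcal{R}_{\rm NW},m)$ admits a $2$-shallow hitting set $X$ whose points $x_1,\ldots,x_n$ have decreasing $x$-coordinates and decreasing $y$-coordinates, and such that (i) $x_1$ is the leftmost point among the $m$ topmost points of $V$; (ii) the hyperedge consisting of the $m$ topmost points of $V$ contains exactly one point of $X$; (iii) for any two consecutive points $x_j, x_{j+1}$, the bottomless rectangle $B_j = \{(x,y) : x(x_{j+1}) \leq x \leq x(x_j),\ y \leq y(x_j)\}$ (top-right corner $x_j$, with $x_{j+1}$ on its left side) satisfies $|B_j \cap V| \geq m+1$; and (iv) for any three consecutive points $x_j,x_{j+1},x_{j+2}$, the axis-aligned rectangle $R_j$ with top-right corner $x_j$ and bottom-left corner $x_{j+2}$ satisfies $|R_j \cap V| \geq m+2$.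
   Context: $\mathcal{R}_{\rm NW} = \{\{(x,y) : x \leq a,\ y \geq b\} : a,b \in \mathbb{R}\}$ is the family of north-west quadrants. $\mathcal{H}(V,\mathcal{R},m)$ is the hypergraph on $V$ whose hyperedges are the sets $V \cap R$, $R \in \mathcal{R}$, of size exactly $m$. General position: pairwise distinct $x$-coordinates, $y$-coordinates and values $x+y$. For a point $p$, $x(p)$ and $y(p)$ are its coordinates. A set $X \subseteq V$ is a $t$-shallow hitting set of a hypergraph on $V$ if every hyperedge contains at least one and at most $t$ points of $X$. *)

From mathcomp Require Import all_boot all_order all_algebra.
Set Implicit Arguments. Unset Strict Implicit. Unset Printing Implicit Defensive.
Import Order.TTheory GRing.Theory Num.Theory.
Local Open Scope ring_scope.

Definition pt (R : realFieldType) := (R * R)%type.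

Definition general_position (R : realFieldType) (V : seq (pt R)) : Prop :=
  forall p q, p \in V -> q \in V -> p != q ->
    [/\ p.1 != q.1, p.2 != q.2 & p.1 + p.2 != q.1 + q.2].

Definition inNW (R : realFieldType) (a b : R) (p : pt R) : bool :=
  (p.1 <= a) && (b <= p.2).

Definition NW_hyperedge (R : realFieldType) (V : seq (pt R)) (m : nat)
    (E : pred (pt R)) : Prop :=
  exists a b, (forall p, E p = (p \in V) && inNW a b p) /\ count E V = m.

Definition shallow_hitting_set (R : realFieldType) (V : seq (pt R)) (m t : nat)
    (X : seq (pt R)) : Prop :=
  [/\ uniq X, {subset X <= V} &
      forall E, NW_hyperedge V m E -> (1 <= count E X <= t)%N].

Definition topmost (R : realFieldType) (V : seq (pt R)) (m : nat) (p : pt R) : bool :=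
  (p \in V) && (Order.lt (count (fun q : pt R => p.2 < q.2) V) m).

Definition inB (R : realFieldType) (p q : pt R) (z : pt R) : bool :=
  [&& q.1 <= z.1, z.1 <= p.1 & z.2 <= p.2].

Definition inRect (R : realFieldType) (p r : pt R) (z : pt R) : bool :=
  [&& r.1 <= z.1, z.1 <= p.1, r.2 <= z.2 & z.2 <= p.2].

(* The hitting set is built greedily from the top: x_1 is the leftmost of the
   m topmost points of V, and x_(j+1) is the leftmost of the m topmost points
   strictly left of x_j, until fewer than m points are left.  A point strictly
   left of x_(j+1) that is not one of these m points lies below all of them, so
   the chain descends, B_j contains these m points and x_j, and R_j contains
   them together with x_j and x_(j+2).  A north-west quadrant with m points
   contains the first x_j lying horizontally inside it (otherwise its m points
   would all be above x_j), and it cannot contain both x_j and some x_k with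
   k >= j + 2, since it would then contain R_j. *)

From mathcomp Require Import all_boot all_order all_algebra.
Set Implicit Arguments. Unset Strict Implicit. Unset Printing Implicit Defensive.
Import Order.TTheory GRing.Theory Num.Theory.
Local Open Scope ring_scope.

Lemma sub_in_count (T : eqType) (a b : pred T) (s : seq T) :
  {in s, subpred a b} -> (count a s <= count b s)%N.
Proof.
elim: s => //= y s IHs sub_ab; apply: leq_add.
  by move: (sub_ab y (mem_head y s)); case: (a y) => // ->.
by apply: IHs => z zs; apply: sub_ab; rewrite in_cons zs orbT.
Qed.

Lemma sub_in_count_ltn (T : eqType) (a b : pred T) (s : seq T) x :
  {in s, subpred a b} -> x \in s -> b x -> ~~ a x ->
  (count a s < count b s)%N.
Proof.
elim: s => // y s IHs sub_ab; rewrite in_cons /= => /orP[/eqP <-|xs] bx nax.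
  rewrite (negbTE nax) bx ltnS; apply: sub_in_count => z zs.
  by apply: sub_ab; rewrite in_cons zs orbT.
rewrite -addnS; apply: leq_add; last first.
  by apply: IHs => // z zs; apply: sub_ab; rewrite in_cons zs orbT.
by move: (sub_ab y (mem_head y s)); case: (a y) => // ->.
Qed.

Lemma exists_argmin_seq (T : eqType) d (X : orderType d) (f : T -> X) s :
  s != [::] -> exists2 v, v \in s & {in s, forall t, (f v <= f t)%O}.
Proof.
elim: s => // a [|b s] IHs _.
  by exists a => [|t]; rewrite ?mem_head // inE => /eqP->.
have [v vs vmin] := IHs isT.
have [av|va] := leP (f a) (f v).
  exists a => [|t]; rewrite ?mem_head // in_cons => /orP[/eqP->//|ts].
  exact: le_trans av (vmin t ts).
exists v => [|t]; first by rewrite in_cons vs orbT.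
by rewrite in_cons => /orP[/eqP->|]; [exact: ltW | exact: vmin].
Qed.

Section RankCount.
Variables (T : eqType) (d : Order.disp_t) (X : orderType d) (f : T -> X).

Definition n_above (W : seq T) (t : T) := count (fun w => (f t < f w)%O) W.

Lemma n_above_lt W t t' : t' \in W -> (f t < f t')%O -> (n_above W t' < n_above W t)%N.
Proof.
move=> t'W lt_tt'; apply: (sub_in_count_ltn (x := t')) => //= [y _|]; last by rewrite ltxx.
exact: lt_trans.
Qed.

Lemma count_few_above W k : uniq W -> {in W &, injective f} -> (k <= size W)%N ->
  count (fun t => n_above W t < k)%N W = k.
Proof.
move=> uW f_inj kW.
have rank_inj : {in W &, injective (n_above W)}.
  move=> t t' tW t'W; apply: contra_eq => /(contra_neq (f_inj t t' tW t'W)).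
  rewrite neq_lt neq_ltn => /orP[/(n_above_lt t'W)|/(n_above_lt tW)] lt_rank.
    by rewrite lt_rank orbT.
  by rewrite lt_rank.
(* An injective map from [W] into [0, size W) is a bijection onto it. *)
have rank_iota : perm_eq (map (n_above W) W) (iota 0 (size W)).
  apply: uniq_perm; rewrite ?iota_uniq ?map_inj_in_uniq //.
  apply: (uniq_min_size _ _ _).2; rewrite ?map_inj_in_uniq ?size_map ?size_iota //.
  move=> i /mapP[t tW ->]; rewrite mem_iota /= -count_predT.
  by apply: (sub_in_count_ltn (x := t)) => //=; rewrite ltxx.
rewrite -[LHS](count_map _ (fun i => i < k)%N) (permP rank_iota).
by rewrite -size_filter (filter_iota_ltn 0 kW) size_iota.
Qed.
End RankCount.

Section GreedyChain.
Variables (R : realFieldType) (V : seq (pt R)) (m : nat).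
Hypotheses (uniq_V : uniq V) (gp_V : general_position V) (m_gt0 : (0 < m)%N).

(* [greedy c X]: [X] is the greedy chain built from the points strictly left of
   abscissa [c], where [None] means no bound. *)
Definition left_of (c : option R) (p : pt R) : bool :=
  if c is Some a then p.1 < a else true.

Definition top (c : option R) (t : pt R) : bool :=
  left_of c t && (n_above snd (filter (left_of c) V) t < m)%N.

Definition leftmost_top (c : option R) (v : pt R) : Prop :=
  [/\ v \in V, top c v & {in V, forall t, top c t -> v.1 <= t.1}].

Inductive greedy : option R -> seq (pt R) -> Prop :=
| greedy_nil c : (count (left_of c) V < m)%N -> greedy c [::]
| greedy_cons c v X : leftmost_top c v -> (m <= count (left_of c) V)%N ->
    greedy (Some v.1) X -> greedy c (v :: X).

Lemma left_of_trans c v p : left_of c v -> p.1 < v.1 -> left_of c p.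
Proof. by case: c => //= a /[swap]; exact: lt_trans. Qed.

Lemma top_count c : (m <= count (left_of c) V)%N -> (m <= count (top c) V)%N.
Proof.
move=> m_left.
have -> : count (top c) V =
          count (fun t => n_above snd (filter (left_of c) V) t < m)%N (filter (left_of c) V).
  by rewrite count_filter; apply: eq_count => t; rewrite /= andbC.
rewrite count_few_above ?filter_uniq ?size_filter //.
move=> p q; rewrite !mem_filter => /andP[_ pV] /andP[_ qV] eq_pq.
by apply: contra_eq eq_pq => ne_pq; have [] := gp_V pV qV ne_pq.
Qed.

Lemma leftmost_top_left c v : leftmost_top c v -> left_of c v.
Proof. by case=> _ /andP[]. Qed.

(* [w] is not a top point by the choice of [v]; being above a top point would make it one. *)
Lemma below_top c v w t : leftmost_top c v -> w \in V -> w.1 < v.1 ->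
  t \in V -> top c t -> w.2 < t.2.
Proof.
case=> vV /andP[cv _] vmin wV wv tV /andP[ct t_top].
have not_top_w : ~~ top c w by apply: contraTN wv => /(vmin w wV); rewrite leNgt.
rewrite ltNge; apply: contraTN t_top => tw; rewrite -leqNgt.
move: not_top_w; rewrite /top (left_of_trans cv wv) -leqNgt => /leq_trans; apply.
by apply: sub_count => z /=; exact: le_lt_trans.
Qed.

Lemma leftmost_top_below c v w : leftmost_top c v -> w \in V -> w.1 < v.1 -> w.2 < v.2.
Proof. by move=> vc wV wv; case: (vc) => vV vtop _; exact: below_top vc wV wv vV vtop. Qed.

Lemma greedyE c v X : greedy c (v :: X) ->
  [/\ leftmost_top c v, (m <= count (left_of c) V)%N & greedy (Some v.1) X].
Proof. by move=> cX; inversion cX. Qed.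

Lemma greedy_subset c X : greedy c X -> {subset X <= V}.
Proof.
elim=> {c X} // c v X [vV _ _] _ _ sub_XV z.
by rewrite in_cons => /orP[/eqP->|/sub_XV].
Qed.

Lemma greedy_left c X : greedy c X -> all (left_of c) X.
Proof.
elim=> {c X} // c v X vc _ _ /allP X_left /=; have cv := leftmost_top_left vc.
by rewrite cv; apply/allP => z /X_left; exact: left_of_trans.
Qed.

Lemma greedy_exists c : exists X, greedy c X.
Proof.
have [n] := ubnP (count (left_of c) V); elim: n c => // n IHn c.
rewrite ltnS => c_n; have [few|many] := ltnP (count (left_of c) V) m.
  by exists [::]; constructor.
have : filter (top c) V != [::].
  by rewrite -size_eq0 size_filter -lt0n (leq_trans m_gt0 (top_count many)).
case/(exists_argmin_seq fst) => v; rewrite mem_filter => /andP[vtop vV] vmin.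
have vc : leftmost_top c v.
  by split=> // t tV ttop; apply: vmin; rewrite mem_filter ttop.
have fewer_left : (count (left_of (Some v.1)) V < count (left_of c) V)%N.
  have cv := leftmost_top_left vc.
  apply: (sub_in_count_ltn (x := v)) => //=; last by rewrite ltxx.
  by move=> y _ /=; apply: left_of_trans cv.
have [X vX] := IHn (Some v.1) (leq_trans fewer_left c_n).
by exists (v :: X); constructor.
Qed.

Section Consecutive.
Variables (c : option R) (v u : pt R).
Hypotheses (vc : leftmost_top c v) (uv : leftmost_top (Some v.1) u).
Hypothesis m_left_v : (m <= count (left_of (Some v.1)) V)%N.

Lemma top_next_bounds t : t \in V -> top (Some v.1) t ->
  [/\ u.1 <= t.1, t.1 < v.1 & t.2 < v.2].
Proof.
move=> tV ttop; have [_ _ umin] := uv; have tv : t.1 < v.1 by case/andP: ttop.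
by split; [exact: umin | | exact: leftmost_top_below vc tV tv].
Qed.

Lemma next_inB_count : (m.+1 <= count (inB v u) V)%N.
Proof.
have [vV _ _] := vc; have u_v : u.1 < v.1 := leftmost_top_left uv.
apply: leq_ltn_trans (top_count m_left_v) _.
apply: (sub_in_count_ltn (x := v)) => //; last by rewrite /top /= ltxx.
  by move=> t tV /(top_next_bounds tV) [ut tv t_v]; rewrite /inB ut (ltW tv) (ltW t_v).
by rewrite /inB (ltW u_v) !lexx.
Qed.

Lemma next_inRect_count w : leftmost_top (Some u.1) w -> (m.+2 <= count (inRect v w) V)%N.
Proof.
move=> wu; have [vV _ _] := vc; have [wV _ _] := wu.
have u_v : u.1 < v.1 := leftmost_top_left uv.
have w_u : w.1 < u.1 := leftmost_top_left wu.
have w_v := lt_trans w_u u_v.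
have w2_v2 : w.2 < v.2 := leftmost_top_below vc wV w_v.
have not_top_w : ~~ top (Some v.1) w.
  by have [_ _ umin] := uv; apply: contraTN w_u => /(umin w wV); rewrite leNgt.
have top_or_v_count : (m.+1 <= count (predU (top (Some v.1)) (pred1 v)) V)%N.
  apply: leq_ltn_trans (top_count m_left_v) _.
  apply: (sub_in_count_ltn (x := v)) => //=; last by rewrite /top /= ltxx.
    by move=> y _ ->.
  by rewrite eqxx orbT.
apply: leq_ltn_trans top_or_v_count _; apply: (sub_in_count_ltn (x := w)) => //=.
- move=> t tV /orP[ttop|/eqP->]; last by rewrite /inRect (ltW w_v) (ltW w2_v2) !lexx.
  have [ut tv t_v] := top_next_bounds tV ttop.
  have w2_t2 : w.2 < t.2 := below_top uv wV w_u tV ttop.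
  by rewrite /inRect (ltW (lt_le_trans w_u ut)) (ltW tv) (ltW w2_t2) (ltW t_v).
- by rewrite /inRect (ltW w_v) (ltW w2_v2) !lexx.
- by rewrite negb_or not_top_w; apply: contraTneq w_v => ->; rewrite ltxx.
Qed.

End Consecutive.

Local Notation x X j := (nth (0, 0) X j).

Lemma greedy_inB c X : greedy c X -> forall j, (j.+1 < size X)%N ->
  (m.+1 <= count (inB (x X j) (x X j.+1)) V)%N.
Proof.
elim=> {c X} // c v X vc _ vX IHX [|j] /=; last exact: IHX.
case: X vX {IHX} => // u X /greedyE[uv m_left_v _] _.
exact: next_inB_count vc uv m_left_v.
Qed.

Lemma greedy_inRect c X : greedy c X -> forall j, (j.+2 < size X)%N ->
  (m.+2 <= count (inRect (x X j) (x X j.+2)) V)%N.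
Proof.
elim=> {c X} // c v X vc _ vX IHX [|j] /=; last exact: IHX.
case: X vX {IHX} => // u [|w X] // /greedyE[uv m_left_v /greedyE[wu _ _]] _ /=.
exact: (next_inRect_count vc uv m_left_v wu).
Qed.

Lemma greedy_uniq c X : greedy c X -> uniq X.
Proof.
elim=> {c X} // c v X _ _ vX uniq_X; rewrite /= uniq_X andbT.
by apply: contraFN (ltxx v.1) => /(allP (greedy_left vX)).
Qed.

Lemma greedy_sorted_x c X : greedy c X -> sorted (fun p q : pt R => q.1 < p.1) X.
Proof.
elim=> {c X} // c v X _ _ vX; rewrite /= path_sortedE; last first.
  by move=> p q r /= qp rq; exact: lt_trans rq qp.
by move=> ->; rewrite andbT; exact: greedy_left vX.
Qed.

Lemma greedy_below_head c v X : greedy c (v :: X) -> all (fun z => z.2 < v.2) X.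
Proof.
case/greedyE => vc _ vX; apply/allP => z zX.
exact: leftmost_top_below vc (greedy_subset vX zX) (allP (greedy_left vX) z zX).
Qed.

Lemma greedy_sorted_y c X : greedy c X -> sorted (fun p q : pt R => q.2 < p.2) X.
Proof.
elim=> {c X} // c v X vc m_left_c vX; rewrite /= path_sortedE; last first.
  by move=> p q r /= qp rq; exact: lt_trans rq qp.
by move=> ->; rewrite andbT; exact: greedy_below_head (greedy_cons vc m_left_c vX).
Qed.

Lemma greedy_hit c X a b : greedy c X -> count (inNW a b) V = m ->
  {in V, forall p, p.1 <= a -> left_of c p} -> has (inNW a b) X.
Proof.
elim=> {c X} [c few_left|c v X vc _ vX IHX] NW_m NW_left.
  suff : (count (inNW a b) V <= count (left_of c) V)%N by rewrite NW_m leqNgt few_left.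
  by apply: sub_in_count => p pV /andP[pa _]; exact: NW_left.
have [va|av] := leP v.1 a; last first.
  by rewrite /= IHX ?orbT // => p pV pa; exact: le_lt_trans pa av.
have [vV /andP[_ v_top] _] := vc.
rewrite /= /inNW va leNgt; apply/orP; left; apply: contraTN v_top => v2b.
rewrite -leqNgt -NW_m /n_above count_filter.
apply: sub_in_count => p pV /andP[pa bp]; rewrite /= NW_left ?andbT //.
exact: lt_le_trans v2b bp.
Qed.

Lemma greedy_shallow c X a b : greedy c X -> count (inNW a b) V = m ->
  (count (inNW a b) X <= 2)%N.
Proof.
move=> cX NW_m; elim: cX => {c X} // c v X vc _ vX IHX /=.
case NW_v: (inNW a b v) => /=; last exact: IHX.
case: X vX {IHX} => [|u [|w X]] //= uX; first by case: (inNW a b u).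
have [uv m_left_v wX] := greedyE uX.
suff : count (inNW a b) (w :: X) = 0%N by move=> /= ->; case: (inNW a b u).
apply/eqP; rewrite eqn0Ngt -has_count; apply/hasPn => z zwX; apply/negP => NW_z.
have z2_w2 : z.2 <= w.2.
  move: zwX; rewrite in_cons => /orP[/eqP->//|zX].
  exact: ltW (allP (greedy_below_head wX) z zX).
have rect_NW : (count (inRect v w) V <= count (inNW a b) V)%N.
  apply: sub_in_count => y _ /and4P[_ yv wy _].
  case/andP: NW_v => va _; case/andP: NW_z => _ bz.
  by rewrite /inNW (le_trans yv va) (le_trans bz (le_trans z2_w2 wy)).
have [wu _ _] := greedyE wX.
have := leq_trans (next_inRect_count vc uv m_left_v wu) rect_NW.
by rewrite NW_m => /ltnW; rewrite ltnn.
Qed.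

Lemma topmost_top p : topmost V m p = (p \in V) && top None p.
Proof. by rewrite /top /= /n_above filter_predT. Qed.

Lemma greedy_nonempty X : (m <= size V)%N -> greedy None X -> X != [::].
Proof.
move=> m_le_V; case: X => // c0.
have : (count (left_of None) V < m)%N by inversion c0.
by rewrite ltnNge count_predT m_le_V.
Qed.

Lemma greedy_shallow_hitting X : greedy None X -> shallow_hitting_set V m 2 X.
Proof.
move=> cX; have X_V := greedy_subset cX.
split=> [|//|E [a [b [E_NW E_m]]]]; first exact: greedy_uniq cX.
have NW_m : count (inNW a b) V = m.
  by rewrite -E_m; apply: eq_in_count => p pV; rewrite E_NW pV.
have -> : count E X = count (inNW a b) X.
  by apply: eq_in_count => p /X_V pV; rewrite E_NW pV.
by rewrite (greedy_shallow cX NW_m) andbT -has_count; exact: greedy_hit cX NW_m _.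
Qed.

Lemma greedy_count_topmost v X : greedy None (v :: X) -> count (topmost V m) (v :: X) = 1%N.
Proof.
case/greedyE => -[vV v_top vmin] _ vX.
rewrite /= topmost_top vV v_top add1n; congr _.+1; apply/eqP.
rewrite eqn0Ngt -has_count; apply/hasPn => z zX; rewrite topmost_top.
apply: contraTN (allP (greedy_left vX) z zX) => /andP[zV z_top].
by rewrite /= -leNgt vmin.
Qed.

End GreedyChain.

Theorem lemma14 (R : realFieldType) (V : seq (pt R)) (m : nat) :
  uniq V -> general_position V -> (0 < m)%N -> (m <= size V)%N ->
  exists X : seq (pt R),
    let x := fun j : nat => nth (0, 0) X j in
    [/\ shallow_hitting_set V m 2 X,
        X != [::],
        sorted (fun p q : pt R => q.1 < p.1) X,
        sorted (fun p q : pt R => q.2 < p.2) X &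
        [/\ (* (i) *) topmost V m (x 0%N) /\
                      (forall q, topmost V m q -> (x 0%N).1 <= q.1),
            (* (ii) *) count (topmost V m) X = 1%N,
            (* (iii) *) (forall j, (j.+1 < size X)%N ->
                          (m.+1 <= count (inB (x j) (x j.+1)) V)%N) &
            (* (iv) *) (forall j, (j.+2 < size X)%N ->
                          (m.+2 <= count (inRect (x j) (x j.+2)) V)%N)]].
Proof.
move=> uniq_V gp_V m_gt0 m_le_V.
have [X cX] := greedy_exists uniq_V gp_V m_gt0 None.
have X_nil := greedy_nonempty m_le_V cX.
case: X X_nil cX => // v X _ cX.
have [[vV v_top vmin] _ _] := greedyE cX.
exists (v :: X); split.
- exact: greedy_shallow_hitting cX.
- by [].
- exact: greedy_sorted_x cX.
- exact: greedy_sorted_y cX.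
split.
- split=> [|q]; rewrite !topmost_top ?vV ?v_top // => /andP[qV q_top].
  exact: vmin.
- exact: greedy_count_topmost cX.
- exact: greedy_inB cX.
- exact: greedy_inRect cX.
Qed.
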